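(* Let $P(x)=a_2x^2+a_1x+a_0$, $R(x)=b_2x^2+b_1x$ and $Q(x)=q_2x^2+q_1x+q_0$ be complex polynomials with $a_2,b_2,q_2\ne0$. For $n\ge0$ and $\alpha\in\mathbb C$ let $\tilde F(n,\alpha)=\prod_{z\in Q^{-1}(P^{-1}(R^{-n}(\alpha)))}z$, the product of the $2^{n+2}$ roots, counted with multiplicity, of $R^{\circ n}(P(Q(z)))=\alpha$. Then $\tilde F(n,\alpha)=\tilde c_{n,1}\alpha+\tilde c_{n,0}$ with $\tilde c_{n,1}=-\frac{b_2}{(q_2^2a_2b_2)^{2^n}}$ and $\tilde c_{n,0}=\frac{1}{(q_2^2a_2b_2)^{2^n}}\big(\tilde H(n)-\frac{b_1}{2}\big)$, where $\tilde H(0)=a_2b_2\big(q_0^2+q_0\frac{a_1}{a_2}+\frac{a_0}{a_2}\big)+\frac{b_1}{2}$ and $\tilde H(n)=\tilde H(n-1)^2+\frac{b_1(2-b_1)}{4}$ for $n\ge1$.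
   Context: $R^{\circ n}$ denotes the $n$-fold composition ($R^{\circ0}=\mathrm{id}$); $R^{-n}(\alpha)$ is the multiset of roots of $R^{\circ n}(w)=\alpha$, and for a polynomial $g$ and multiset $S$, $g^{-1}(S)$ is the multiset union of the roots of $g(z)=w$ over $w\in S$. *)

From HB Require Import structures.
From mathcomp Require Import all_boot all_order all_algebra.
From mathcomp Require Import complex.
From mathcomp Require Import reals.
Set Implicit Arguments. Unset Strict Implicit. Unset Printing Implicit Defensive.
Import Order.TTheory GRing.Theory Num.Theory.
Local Open Scope ring_scope.

(* The multiset of roots (with multiplicity) of a polynomial over an
   algebraically closed field, as a sequence r with p = lc(p) * prod (X - z). *)
Definition rootseq (F : closedFieldType) (p : {poly F}) : seq F :=
  sval (closed_field_poly_normal p).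

Definition polypreim (F : closedFieldType) (g : {poly F}) (S : seq F) : seq F :=
  flatten [seq rootseq (g - w%:P) | w <- S].

Definition polyiter (F : nzRingType) (n : nat) (r : {poly F}) : {poly F} :=
  iter n (fun p => r \Po p) 'X.

Definition iterpreim (F : closedFieldType) (r : {poly F}) (n : nat) (alpha : F) : seq F :=
  rootseq (polyiter n r - alpha%:P).

Definition Ftilde (F : closedFieldType) (P R Q : {poly F}) (n : nat) (alpha : F) : F :=
  \prod_(z <- polypreim Q (polypreim P (iterpreim R n alpha))) z.

Fixpoint Htilde (F : fieldType) (a2 a1 a0 b2 b1 q0 : F) (n : nat) : F :=
  match n with
  | 0 => a2 * b2 * (q0 ^+ 2 + q0 * (a1 / a2) + a0 / a2) + b1 / 2
  | m.+1 => (Htilde a2 a1 a0 b2 b1 q0 m) ^+ 2 + b1 * (2 - b1) / 4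
  end.

From HB Require Import structures.
From mathcomp Require Import all_boot all_order all_algebra.
From mathcomp Require Import complex.
From mathcomp Require Import reals.
From mathcomp Require Import ring.
Import Order.TTheory GRing.Theory Num.Theory.
Local Open Scope ring_scope.

(* For a polynomial g of degree at least 1 with leading coefficient l, the
   product of the c - z over the roots z of g(z) = w is (g(c) - w) / l.
   Applying this to Q at c = 0 (the multiset Q^{-1}(S) has even size, so the
   sign disappears), then to P at c = q0 and to R^{o n} at c = P(q0) gives
   Ftilde(n, alpha) = b2 (R^{o n}(P(q0)) - alpha) / (q2^2 a2 b2)^(2^n), since
   lc(R^{o n}) = b2^(2^n - 1).  Finally h = b2 y + b1/2 conjugates
   y |-> b2 y^2 + b1 y into h |-> h^2 + b1 (2 - b1) / 4, so that
   b2 R^{o n}(P(q0)) + b1/2 = Htilde(n). *)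

Lemma prodr_const_seq (R : pzSemiRingType) (T : Type) (s : seq T) (x : R) :
  \prod_(i <- s) x = x ^+ size s.
Proof. by elim: s => [|y s IHs]; rewrite ?big_nil // big_cons IHs exprS. Qed.

Lemma prodrN_seq (R : comPzRingType) (T : Type) (s : seq T) (F : T -> R) :
  \prod_(i <- s) - F i = (-1) ^+ size s * \prod_(i <- s) F i.
Proof.
elim: s => [|y s IHs]; first by rewrite !big_nil mulr1.
by rewrite !big_cons IHs exprS /=; ring.
Qed.

Section PolyFacts.
Context {R : idomainType}.
Implicit Types (p r : {poly R}) (a b c : R).

Lemma size_subC p c : (1 < size p)%N -> size (p - c%:P) = size p.
Proof.
by move=> p_gt1; rewrite size_polyDl // size_polyN (leq_ltn_trans (size_polyC_leq1 c)).
Qed.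

Lemma lead_coef_subC p c : (1 < size p)%N -> lead_coef (p - c%:P) = lead_coef p.
Proof.
by move=> p_gt1; rewrite lead_coefDl // size_polyN (leq_ltn_trans (size_polyC_leq1 c)).
Qed.

Lemma size_linear_lt3 b c : (size (b%:P * 'X + c%:P)%R < 3)%N.
Proof.
rewrite (leq_ltn_trans (size_polyD _ _)) // gtn_max (leq_ltn_trans (size_polyC_leq1 _)) //.
rewrite (leq_ltn_trans (size_polyMleq _ _)) // size_polyX addn2.
exact: size_polyC_leq1.
Qed.

Lemma size_quad a b c : a != 0 -> size (a%:P * 'X^2 + b%:P * 'X + c%:P) = 3%N.
Proof.
move=> a0; have a3 : size (a%:P * 'X^2) = 3%N by rewrite size_Cmul ?size_polyXn.
by rewrite -addrA size_polyDl a3 ?size_linear_lt3.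
Qed.

Lemma lead_coef_quad a b c : a != 0 -> lead_coef (a%:P * 'X^2 + b%:P * 'X + c%:P) = a.
Proof.
move=> a0; have a3 : size (a%:P * 'X^2) = 3%N by rewrite size_Cmul ?size_polyXn.
by rewrite -addrA lead_coefDl ?a3 ?size_linear_lt3 // mul_polyC lead_coefZ lead_coefXn mulr1.
Qed.

Lemma polyiterS n r : polyiter n.+1 r = r \Po polyiter n r.
Proof. by []. Qed.

Lemma size_polyiter n r :
  (1 < size r)%N -> size (polyiter n r) = ((size r).-1 ^ n).+1.
Proof.
move=> r_gt1; elim: n => [|n IHn]; first by rewrite size_polyX.
have d_gt0 : (0 < (size r).-1 ^ n.+1)%N by rewrite expn_gt0 ltn_predRL r_gt1.
have := size_comp_poly r (polyiter n r); rewrite -polyiterS IHn /= -expnS.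
by case: (size _) => [|k] /= E; rewrite -E in d_gt0 *.
Qed.

Lemma size_polyiter_gt1 n r : (1 < size r)%N -> (1 < size (polyiter n r))%N.
Proof. by move=> r_gt1; rewrite size_polyiter // ltnS expn_gt0 ltn_predRL r_gt1. Qed.

Lemma lead_coef_polyiter n r : size r = 3%N ->
  lead_coef r * lead_coef (polyiter n r) = lead_coef r ^+ (2 ^ n).
Proof.
move=> r3; elim: n => [|n IHn]; first by rewrite lead_coefX mulr1.
rewrite polyiterS lead_coef_comp ?size_polyiter_gt1 ?r3 //.
by rewrite mulrA -expr2 -exprMn IHn expnSr exprM.
Qed.

End PolyFacts.

Section RootProducts.
Context {F : closedFieldType}.
Implicit Types (p g r : {poly F}) (S : seq F).

Lemma rootseqE p : p = lead_coef p *: \prod_(z <- rootseq p) ('X - z%:P).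
Proof. by rewrite /rootseq; case: (closed_field_poly_normal p). Qed.

Lemma size_rootseq p : p != 0 -> size (rootseq p) = (size p).-1.
Proof.
move=> p0; rewrite [in RHS](rootseqE p) size_scale ?lead_coef_eq0 //.
by rewrite size_prod_XsubC.
Qed.

Lemma prod_rootseq_sub p c : p != 0 ->
  \prod_(z <- rootseq p) (c - z) = p.[c] / lead_coef p.
Proof.
move=> p0; rewrite [in RHS](rootseqE p) hornerZ horner_prod.
under [in RHS]eq_bigr do rewrite hornerXsubC.
by rewrite -(rootseqE p) mulrC mulKf ?lead_coef_eq0.
Qed.

Lemma size_polypreim g S :
  (1 < size g)%N -> size (polypreim g S) = ((size g).-1 * size S)%N.
Proof.
move=> g_gt1; rewrite /polypreim size_flatten /shape -map_comp sumnE big_map.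
rewrite (eq_bigr (fun _ => (size g).-1)) => [|w _].
  by rewrite big_const_seq count_predT iter_addn_0 mulnC.
have gw0 : g - w%:P != 0 by rewrite -size_poly_eq0 size_subC // -lt0n ltnW.
by rewrite /= size_rootseq // size_subC.
Qed.

Lemma prod_polypreim_sub g S c : (1 < size g)%N ->
  \prod_(z <- polypreim g S) (c - z)
  = \prod_(w <- S) (g.[c] - w) / lead_coef g ^+ size S.
Proof.
move=> g_gt1; rewrite /polypreim big_flatten big_map -prodr_const_seq -prodf_div.
apply: eq_bigr => w _.
have gw0 : g - w%:P != 0 by rewrite -size_poly_eq0 size_subC // -lt0n ltnW.
by rewrite prod_rootseq_sub // lead_coef_subC // hornerD hornerN hornerC.
Qed.

Lemma prod_polypreim g S : (1 < size g)%N ->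
  \prod_(z <- polypreim g S) z
  = (-1) ^+ ((size g).-1 * size S) * (\prod_(w <- S) (g.[0] - w) / lead_coef g ^+ size S).
Proof.
move=> g_gt1; rewrite -prod_polypreim_sub // -size_polypreim // -prodrN_seq.
by apply: eq_bigr => z _; rewrite sub0r opprK.
Qed.

Lemma size_iterpreim r n alpha :
  (1 < size r)%N -> size (iterpreim r n alpha) = ((size r).-1 ^ n)%N.
Proof.
move=> r_gt1; have rn_gt1 := size_polyiter_gt1 n _ r_gt1.
rewrite size_rootseq; last by rewrite -size_poly_eq0 size_subC // -lt0n ltnW.
by rewrite size_subC // size_polyiter.
Qed.

Lemma prod_iterpreim_sub r n alpha c : size r = 3%N ->
  \prod_(u <- iterpreim r n alpha) (c - u)
  = lead_coef r * ((polyiter n r).[c] - alpha) / lead_coef r ^+ (2 ^ n).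
Proof.
move=> r3; have rn_gt1 : (1 < size (polyiter n r))%N by rewrite size_polyiter_gt1 ?r3.
have lr0 : lead_coef r != 0 by rewrite lead_coef_eq0 -size_poly_eq0 r3.
rewrite prod_rootseq_sub; last by rewrite -size_poly_eq0 size_subC // -lt0n ltnW.
rewrite lead_coef_subC // -(lead_coef_polyiter n _ r3) hornerD hornerN hornerC.
have lrn0 : lead_coef (polyiter n r) != 0 by rewrite lead_coef_eq0 -size_poly_eq0 -lt0n ltnW.
by field; apply/andP.
Qed.

End RootProducts.

Lemma Htilde_polyiter (F : fieldType) (a2 a1 a0 b2 b1 q0 : F) n :
  2 != 0 :> F -> a2 != 0 ->
  Htilde a2 a1 a0 b2 b1 q0 n
  = b2 * (polyiter n (b2%:P * 'X^2 + b1%:P * 'X)).[(a2%:P * 'X^2 + a1%:P * 'X + a0%:P).[q0]]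
    + b1 / 2.
Proof.
move=> two0 a20; elim: n => [|n /= ->]; rewrite ?horner_comp.
  by rewrite /= hornerX !(hornerD, hornerM, hornerC, hornerX, hornerXn); field; rewrite two0.
have four0 : 4 != 0 :> F by rewrite [4%:R](natrM _ 2 2) mulf_neq0.
by rewrite !(hornerD, hornerM, hornerC, hornerX, hornerXn); field; rewrite two0.
Qed.

Theorem lemma5p6 (R : realType) (a2 a1 a0 b2 b1 q2 q1 q0 : R[i]) :
  a2 != 0 -> b2 != 0 -> q2 != 0 ->
  forall (n : nat) (alpha : R[i]),
    Ftilde (a2%:P * 'X^2 + a1%:P * 'X + a0%:P)
           (b2%:P * 'X^2 + b1%:P * 'X)
           (q2%:P * 'X^2 + q1%:P * 'X + q0%:P) n alpha
    = (- b2 / (q2 ^+ 2 * a2 * b2) ^+ (2 ^ n)) * alpha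
      + (Htilde a2 a1 a0 b2 b1 q0 n - b1 / 2) / (q2 ^+ 2 * a2 * b2) ^+ (2 ^ n).
Proof.
move=> a20 b20 q20 n alpha.
set P := _ + a0%:P; set Rq := _ + b1%:P * 'X; set Q := _ + q0%:P.
have two0 : 2 != 0 :> R[i] by rewrite pnatr_eq0.
have P3 : size P = 3%N by exact: size_quad.
have Q3 : size Q = 3%N by exact: size_quad.
have R3 : size Rq = 3%N by have := size_quad _ b1 0 b20; rewrite polyC0 addr0.
have lR : lead_coef Rq = b2 by have := lead_coef_quad _ b1 0 b20; rewrite polyC0 addr0.
have Q0 : Q.[0] = q0.
  by rewrite /Q !(hornerD, hornerM, hornerC, hornerX, hornerXn) !(mulr0, add0r).
rewrite /Ftilde prod_polypreim ?Q3 // exprM sqrrN !expr1n mul1r Q0.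
rewrite prod_polypreim_sub ?P3 // prod_iterpreim_sub //.
rewrite size_polypreim ?P3 // size_iterpreim ?R3 // !lead_coef_quad // lR.
rewrite Htilde_polyiter // -/P -/Rq /= mulnC exprM !exprMn.
by field; rewrite !expf_neq0.
Qed.
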